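(* Let $\mathbb{E}$ be a finitely complete category, $\Sigma$ a fibrational class of split epimorphisms, and suppose $\mathbb{E}$ is a $\Sigma$-Mal'tsev category. Let $d_0,d_1\colon X_1\rightrightarrows X_0$, $s_0\colon X_0\to X_1$ ($d_0s_0=d_1s_0=1_{X_0}$) be a reflexive graph such that $(d_0,s_0)\in\Sigma$. Let $X_2=\{(u,v)\in X_1\times X_1: d_1u=d_0v\}$ be the pullback of $d_0$ along $d_1$ (the object of composable pairs), and let $\iota_1=(1_{X_1},s_0d_1)\colon X_1\to X_2$ and $\iota_2=(s_0d_0,1_{X_1})\colon X_1\to X_2$. Then there is at most one morphism $m\colon X_2\to X_1$ with $m\iota_1=1_{X_1}$ and $m\iota_2=1_{X_1}$, and whenever such an $m$ exists, it is the composition of an internal category structure on this reflexive graph. Consequently, on such a reflexive graph there is at most one structure of internal category.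
   Context: A split epimorphism is a pair $(f,s)$ with $fs=1$. A class $\Sigma$ of split epimorphisms is fibrational if it contains all split epimorphisms $(f,s)$ with $f$ invertible and is stable under pullback along any morphism. A pair of morphisms with common codomain $Z$ is jointly extremally epic if it factors jointly through no non-invertible monomorphism into $Z$. $\mathbb{E}$ is $\Sigma$-Mal'tsev if for every split epimorphism $(f,s)\colon X\rightleftarrows Y$ in $\Sigma$ and every split epimorphism $(g,t)$ with $g\colon Y'\to Y$, letting $X'=Y'\times_YX$, $s'=(1_{Y'},sg)$, $\bar t=(tf,1_X)$, the pair $(s',\bar t)$ is jointly extremally epic. *)

Record Category := {
  Ob :> Type;
  Hom : Ob -> Ob -> Type;
  idm : forall X : Ob, Hom X X;
  comp : forall X Y Z : Ob, Hom Y Z -> Hom X Y -> Hom X Z;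
  comp_assoc : forall (X Y Z W : Ob) (h : Hom Z W) (g : Hom Y Z) (f : Hom X Y),
      comp X Z W h (comp X Y Z g f) = comp X Y W (comp Y Z W h g) f;
  comp_id_l : forall (X Y : Ob) (f : Hom X Y), comp X Y Y (idm Y) f = f;
  comp_id_r : forall (X Y : Ob) (f : Hom X Y), comp X X Y f (idm X) = f
}.

Arguments Hom {c} X Y.
Arguments idm {c} X.
Arguments comp {c X Y Z} g f.

Notation "g \o f" := (comp g f) (at level 40, left associativity).

Section Notions.
Context {C : Category}.

Definition is_iso {X Y : C} (f : Hom X Y) : Prop :=
  exists g : Hom Y X, g \o f = idm X /\ f \o g = idm Y.

Definition is_mono {X Y : C} (f : Hom X Y) : Prop :=
  forall (Z : C) (a b : Hom Z X), f \o a = f \o b -> a = b.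

Definition is_pullback {X Y Z P : C} (f : Hom X Z) (g : Hom Y Z)
  (p1 : Hom P X) (p2 : Hom P Y) : Prop :=
  f \o p1 = g \o p2 /\
  forall (Q : C) (q1 : Hom Q X) (q2 : Hom Q Y), f \o q1 = g \o q2 ->
    exists u : Hom Q P, (p1 \o u = q1 /\ p2 \o u = q2) /\
      forall v : Hom Q P, p1 \o v = q1 -> p2 \o v = q2 -> v = u.

Definition is_terminal (T : C) : Prop :=
  forall X : C, exists t : Hom X T, forall t' : Hom X T, t' = t.

Definition finitely_complete : Prop :=
  (exists T : C, is_terminal T) /\
  (forall (X Y Z : C) (f : Hom X Z) (g : Hom Y Z),
     exists (P : C) (p1 : Hom P X) (p2 : Hom P Y), is_pullback f g p1 p2).

Definition split_epi_class := forall X Y : C, Hom X Y -> Hom Y X -> Prop.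

Definition fibrational (Sigma : split_epi_class) : Prop :=
  (forall (X Y : C) (f : Hom X Y) (s : Hom Y X), Sigma X Y f s -> f \o s = idm Y) /\
  (forall (X Y : C) (f : Hom X Y) (s : Hom Y X),
      f \o s = idm Y -> is_iso f -> Sigma X Y f s) /\
  (forall (X Y Y' P : C) (f : Hom X Y) (s : Hom Y X) (h : Hom Y' Y)
          (p1 : Hom P Y') (p2 : Hom P X) (s' : Hom Y' P),
      Sigma X Y f s -> is_pullback h f p1 p2 ->
      p1 \o s' = idm Y' -> p2 \o s' = s \o h ->
      Sigma P Y' p1 s').

Definition jointly_extremally_epic {A B Z : C} (a : Hom A Z) (b : Hom B Z) : Prop :=
  forall (M : C) (n : Hom M Z) (a' : Hom A M) (b' : Hom B M),
    is_mono n -> n \o a' = a -> n \o b' = b -> is_iso n.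

Definition Sigma_Maltsev (Sigma : split_epi_class) : Prop :=
  forall (X Y Y' X' : C) (f : Hom X Y) (s : Hom Y X) (g : Hom Y' Y) (t : Hom Y Y')
         (p1 : Hom X' Y') (p2 : Hom X' X) (s' : Hom Y' X') (tbar : Hom X X'),
    Sigma X Y f s -> g \o t = idm Y ->
    is_pullback g f p1 p2 ->
    p1 \o s' = idm Y' -> p2 \o s' = s \o g ->
    p1 \o tbar = t \o f -> p2 \o tbar = idm X ->
    jointly_extremally_epic s' tbar.

(* Internal category structure on a reflexive graph (d0, d1, s0) with
   object of composable pairs X2 (pi1, pi2 : pullback of d0 along d1,
   d1 pi1 = d0 pi2), inclusions i1 = (1, s0 d1), i2 = (s0 d0, 1):
   m is a composition iff it respects domains/codomains, is unital and
   associative (associativity stated on the object X3 of composable triples,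
   for any choice of that pullback). *)
Definition internal_category_composition {X0 X1 X2 : C}
  (d0 d1 : Hom X1 X0) (s0 : Hom X0 X1) (pi1 pi2 : Hom X2 X1)
  (i1 i2 : Hom X1 X2) (m : Hom X2 X1) : Prop :=
  d0 \o m = d0 \o pi1 /\ d1 \o m = d1 \o pi2 /\
  m \o i1 = idm X1 /\ m \o i2 = idm X1 /\
  forall (X3 : C) (q1 q2 : Hom X3 X2) (a b : Hom X3 X2),
    is_pullback pi2 pi1 q1 q2 ->
    (* a = (m q1, pi2 q2) : (u,v,w) |-> (u;v, w) *)
    pi1 \o a = m \o q1 -> pi2 \o a = pi2 \o q2 ->
    (* b = (pi1 q1, m q2) : (u,v,w) |-> (u, v;w) *)
    pi1 \o b = pi1 \o q1 -> pi2 \o b = m \o q2 ->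
    m \o a = m \o b.

End Notions.

(** In a Σ-Mal'tsev category the two inclusions [i1 = (1, s0 d1)] and
    [i2 = (s0 d0, 1)] of [X1] into the object [X2] of composable pairs are
    jointly extremally epic, and in a finitely complete category such a pair
    is jointly epic (a morphism is determined by its composites with it,
    since both composites factor through the equalizer, which must then be
    invertible). Hence a multiplication is determined by the unit laws, and
    so are the laws [d0 m = d0 pi1] and [d1 m = d1 pi2]. For associativity,
    the split epimorphism [(pi1, i1)] lies in Σ, being a pullback of
    [(d0, s0)], so the object [X3] of composable triples again carries a
    jointly extremally epic pair [(1, i1 pi2)], [(i2 pi1, 1)]; on both of
    them the two bracketings of [m] agree by the unit laws. *)


Section Limits.
Context {C : Category}.

Lemma pullback_hom_ext {X Y Z P : C} (f : Hom X Z) (g : Hom Y Z)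
    (p1 : Hom P X) (p2 : Hom P Y) :
  is_pullback f g p1 p2 -> forall (Q : C) (x y : Hom Q P),
  p1 \o x = p1 \o y -> p2 \o x = p2 \o y -> x = y.
Proof.
  intros [Hcomm Huniv] Q x y H1 H2.
  destruct (Huniv Q (p1 \o x) (p2 \o x)) as [u [_ Hu]].
  { rewrite !comp_assoc, Hcomm. reflexivity. }
  rewrite (Hu x eq_refl eq_refl), (Hu y (eq_sym H1) (eq_sym H2)). reflexivity.
Qed.

Lemma pullback_pair {X Y Z P : C} (f : Hom X Z) (g : Hom Y Z)
    (p1 : Hom P X) (p2 : Hom P Y) :
  is_pullback f g p1 p2 -> forall (Q : C) (q1 : Hom Q X) (q2 : Hom Q Y),
  f \o q1 = g \o q2 -> exists u : Hom Q P, p1 \o u = q1 /\ p2 \o u = q2.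
Proof.
  intros [_ Huniv] Q q1 q2 H.
  destruct (Huniv Q q1 q2 H) as [u [[E1 E2] _]]. eauto.
Qed.

Lemma pullback_comm {X Y Z P : C} (f : Hom X Z) (g : Hom Y Z)
    (p1 : Hom P X) (p2 : Hom P Y) :
  is_pullback f g p1 p2 -> f \o p1 = g \o p2.
Proof. intros [H _]. exact H. Qed.

Hypothesis hC : finitely_complete (C := C).

Lemma binary_product_exists (Z Y : C) :
  exists (P : C) (r1 : Hom P Z) (r2 : Hom P Y),
    (forall (Q : C) (x : Hom Q Z) (y : Hom Q Y),
        exists u : Hom Q P, r1 \o u = x /\ r2 \o u = y) /\
    (forall (Q : C) (u v : Hom Q P), r1 \o u = r1 \o v -> r2 \o u = r2 \o v -> u = v).
Proof.
  destruct hC as [[T HT] Hpb].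
  destruct (HT Z) as [tZ _]. destruct (HT Y) as [tY _].
  destruct (Hpb Z Y T tZ tY) as [P [r1 [r2 HP]]].
  exists P, r1, r2. split.
  - intros Q x y. apply (pullback_pair _ _ _ _ HP).
    destruct (HT Q) as [tQ HtQ].
    rewrite (HtQ (tZ \o x)), (HtQ (tY \o y)). reflexivity.
  - exact (pullback_hom_ext _ _ _ _ HP).
Qed.

(* The equalizer is the pullback of the graphs [(1, h)] and [(1, h')]. *)
Lemma equalizer_exists {Z Y : C} (h h' : Hom Z Y) :
  exists (E : C) (e : Hom E Z),
    is_mono e /\ h \o e = h' \o e /\
    forall (W : C) (c : Hom W Z), h \o c = h' \o c -> exists c', e \o c' = c.
Proof.
  destruct (binary_product_exists Z Y) as [P [r1 [r2 [Hpair Hext]]]].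
  destruct (Hpair Z (idm Z) h) as [g [Hg1 Hg2]].
  destruct (Hpair Z (idm Z) h') as [g' [Hg1' Hg2']].
  destruct hC as [_ Hpb].
  destruct (Hpb Z Z P g g') as [E [e1 [e2 HE]]].
  pose proof (pullback_comm _ _ _ _ HE) as Hcomm.
  assert (Heq : e1 = e2).
  { transitivity ((r1 \o g) \o e1); [rewrite Hg1, comp_id_l; reflexivity|].
    rewrite <- comp_assoc, Hcomm, comp_assoc, Hg1', comp_id_l. reflexivity. }
  exists E, e1. split; [|split].
  - intros M x y Hxy. apply (pullback_hom_ext _ _ _ _ HE); [|rewrite <- Heq]; exact Hxy.
  - rewrite <- Hg2, <- Hg2', <- !comp_assoc, Hcomm, Heq. reflexivity.
  - intros W c Hc.
    destruct (pullback_pair _ _ _ _ HE W c c) as [c' [Ec _]]; [|eauto].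
    apply Hext; rewrite !comp_assoc; [rewrite Hg1, Hg1' | rewrite Hg2, Hg2']; auto.
Qed.

Lemma jointly_extremally_epic_cancel {A B Z Y : C} (a : Hom A Z) (b : Hom B Z) :
  jointly_extremally_epic a b ->
  forall h h' : Hom Z Y, h \o a = h' \o a -> h \o b = h' \o b -> h = h'.
Proof.
  intros J h h' Ha Hb.
  destruct (equalizer_exists h h') as [E [e [He_mono [He Hfactor]]]].
  destruct (Hfactor A a Ha) as [a' Ea]. destruct (Hfactor B b Hb) as [b' Eb].
  destruct (J E e a' b' He_mono Ea Eb) as [k [_ Hk]].
  rewrite <- (comp_id_r _ _ _ h), <- (comp_id_r _ _ _ h'), <- Hk, !comp_assoc, He.
  reflexivity.
Qed.

End Limits.

Section SigmaMaltsev.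
Context {C : Category} (Sigma : split_epi_class (C := C)).
Hypotheses (hC : finitely_complete (C := C)) (hM : Sigma_Maltsev Sigma).

Lemma Sigma_Maltsev_cancel {X Y Y' X' W : C} (f : Hom X Y) (s : Hom Y X)
    (g : Hom Y' Y) (t : Hom Y Y') (p1 : Hom X' Y') (p2 : Hom X' X)
    (s' : Hom Y' X') (tbar : Hom X X') :
  Sigma X Y f s -> g \o t = idm Y -> is_pullback g f p1 p2 ->
  p1 \o s' = idm Y' -> p2 \o s' = s \o g ->
  p1 \o tbar = t \o f -> p2 \o tbar = idm X ->
  forall h h' : Hom X' W, h \o s' = h' \o s' -> h \o tbar = h' \o tbar -> h = h'.
Proof.
  intros. apply (jointly_extremally_epic_cancel hC s' tbar); auto.
  eapply hM; eauto.
Qed.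

Variables (X0 X1 X2 : C) (d0 d1 : Hom X1 X0) (s0 : Hom X0 X1).
Hypotheses (hd0 : d0 \o s0 = idm X0) (hd1 : d1 \o s0 = idm X0)
  (hSig : Sigma X1 X0 d0 s0).
Variables (pi1 pi2 : Hom X2 X1) (i1 i2 : Hom X1 X2).
Hypotheses (hX2 : is_pullback d1 d0 pi1 pi2)
  (hi1a : pi1 \o i1 = idm X1) (hi1b : pi2 \o i1 = s0 \o d1)
  (hi2a : pi1 \o i2 = s0 \o d0) (hi2b : pi2 \o i2 = idm X1).

Lemma composable_pairs_cancel {W : C} (h h' : Hom X2 W) :
  h \o i1 = h' \o i1 -> h \o i2 = h' \o i2 -> h = h'.
Proof. apply (Sigma_Maltsev_cancel d0 s0 d1 s0 pi1 pi2); auto. Qed.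

Lemma unital_multiplication_unique (m m' : Hom X2 X1) :
  m \o i1 = idm X1 -> m \o i2 = idm X1 ->
  m' \o i1 = idm X1 -> m' \o i2 = idm X1 -> m = m'.
Proof. intros. apply composable_pairs_cancel; congruence. Qed.

Variable m : Hom X2 X1.
Hypotheses (hm1 : m \o i1 = idm X1) (hm2 : m \o i2 = idm X1).

Lemma unital_multiplication_d0 : d0 \o m = d0 \o pi1.
Proof.
  apply composable_pairs_cancel; rewrite <- !comp_assoc.
  - rewrite hm1, hi1a. reflexivity.
  - rewrite hm2, hi2a, comp_id_r, comp_assoc, hd0, comp_id_l. reflexivity.
Qed.

Lemma unital_multiplication_d1 : d1 \o m = d1 \o pi2.
Proof.
  apply composable_pairs_cancel; rewrite <- !comp_assoc.
  - rewrite hm1, hi1b, comp_id_r, comp_assoc, hd1, comp_id_l. reflexivity.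
  - rewrite hm2, hi2b. reflexivity.
Qed.

Hypothesis hS : fibrational Sigma.

Lemma unital_multiplication_assoc (X3 : C) (q1 q2 a b : Hom X3 X2) :
  is_pullback pi2 pi1 q1 q2 ->
  pi1 \o a = m \o q1 -> pi2 \o a = pi2 \o q2 ->
  pi1 \o b = pi1 \o q1 -> pi2 \o b = m \o q2 ->
  m \o a = m \o b.
Proof.
  intros HX3 Ha1 Ha2 Hb1 Hb2.
  assert (HSig2 : Sigma X2 X1 pi1 i1).
  { destruct hS as [_ [_ Hstable]]. eapply Hstable; eauto. }
  destruct (pullback_pair _ _ _ _ HX3 X2 (idm X2) (i1 \o pi2)) as [s' [Hs1 Hs2]].
  { rewrite comp_assoc, hi1a, comp_id_l, comp_id_r. reflexivity. }
  destruct (pullback_pair _ _ _ _ HX3 X2 (i2 \o pi1) (idm X2)) as [tb [Ht1 Ht2]].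
  { rewrite comp_assoc, hi2b, comp_id_l, comp_id_r. reflexivity. }
  (* [s'] sends [(u, v)] to [(u, v, 1)] and [tb] sends it to [(1, u, v)],
     so each bracketing collapses to [m] on one of them and to [1] on the other. *)
  apply (Sigma_Maltsev_cancel pi1 i1 pi2 i2 q1 q2 s' tb); auto.
  - assert (Has : a \o s' = i1 \o m).
    { apply (pullback_hom_ext _ _ _ _ hX2); rewrite !comp_assoc.
      - rewrite Ha1, hi1a, comp_id_l, <- comp_assoc, Hs1, comp_id_r. reflexivity.
      - rewrite Ha2, hi1b, <- !comp_assoc, Hs2, unital_multiplication_d1,
          !comp_assoc, hi1b. reflexivity. }
    assert (Hbs : b \o s' = idm X2).
    { apply (pullback_hom_ext _ _ _ _ hX2); rewrite !comp_assoc, comp_id_r.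
      - rewrite Hb1, <- comp_assoc, Hs1, comp_id_r. reflexivity.
      - rewrite Hb2, <- comp_assoc, Hs2, comp_assoc, hm1, comp_id_l. reflexivity. }
    rewrite <- !comp_assoc, Has, Hbs, comp_assoc, hm1, comp_id_l, comp_id_r.
    reflexivity.
  - assert (Hat : a \o tb = idm X2).
    { apply (pullback_hom_ext _ _ _ _ hX2); rewrite !comp_assoc, comp_id_r.
      - rewrite Ha1, <- comp_assoc, Ht1, comp_assoc, hm2, comp_id_l. reflexivity.
      - rewrite Ha2, <- comp_assoc, Ht2, comp_id_r. reflexivity. }
    assert (Hbt : b \o tb = i2 \o m).
    { apply (pullback_hom_ext _ _ _ _ hX2); rewrite !comp_assoc.
      - rewrite Hb1, hi2a, <- !comp_assoc, Ht1, unital_multiplication_d0,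
          !comp_assoc, hi2a. reflexivity.
      - rewrite Hb2, hi2b, comp_id_l, <- comp_assoc, Ht2, comp_id_r. reflexivity. }
    rewrite <- !comp_assoc, Hat, Hbt, comp_assoc, hm2, comp_id_l, comp_id_r.
    reflexivity.
Qed.

End SigmaMaltsev.

Theorem proposition2p4 (C : Category) (Sigma : split_epi_class)
  (hC : finitely_complete (C := C)) (hS : fibrational Sigma)
  (hM : Sigma_Maltsev Sigma)
  (X0 X1 X2 : C) (d0 d1 : Hom X1 X0) (s0 : Hom X0 X1)
  (hd0 : d0 \o s0 = idm X0) (hd1 : d1 \o s0 = idm X0)
  (hSig : Sigma X1 X0 d0 s0)
  (pi1 pi2 : Hom X2 X1) (hX2 : is_pullback d1 d0 pi1 pi2)
  (i1 i2 : Hom X1 X2)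
  (hi1a : pi1 \o i1 = idm X1) (hi1b : pi2 \o i1 = s0 \o d1)
  (hi2a : pi1 \o i2 = s0 \o d0) (hi2b : pi2 \o i2 = idm X1) :
  (forall m m' : Hom X2 X1,
      m \o i1 = idm X1 -> m \o i2 = idm X1 ->
      m' \o i1 = idm X1 -> m' \o i2 = idm X1 -> m = m') /\
  (forall m : Hom X2 X1,
      m \o i1 = idm X1 -> m \o i2 = idm X1 ->
      internal_category_composition d0 d1 s0 pi1 pi2 i1 i2 m) /\
  (forall m m' : Hom X2 X1,
      internal_category_composition d0 d1 s0 pi1 pi2 i1 i2 m ->
      internal_category_composition d0 d1 s0 pi1 pi2 i1 i2 m' -> m = m').
Proof.
  assert (Huniq : forall m m' : Hom X2 X1,
      m \o i1 = idm X1 -> m \o i2 = idm X1 ->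
      m' \o i1 = idm X1 -> m' \o i2 = idm X1 -> m = m').
  { exact (unital_multiplication_unique Sigma hC hM X0 X1 X2 d0 d1 s0 hd1 hSig
             pi1 pi2 i1 i2 hX2 hi1a hi1b hi2a hi2b). }
  split; [exact Huniq | split].
  - intros m hm1 hm2. repeat split; try assumption.
    + apply (unital_multiplication_d0 Sigma hC hM X0 X1 X2 d0 d1 s0)
        with (pi2 := pi2) (i1 := i1) (i2 := i2); assumption.
    + apply (unital_multiplication_d1 Sigma hC hM X0 X1 X2 d0 d1 s0)
        with (pi1 := pi1) (i1 := i1) (i2 := i2); assumption.
    + intros X3 q1 q2 a b. apply (unital_multiplication_assoc Sigma hC hM X0 X1 X2
        d0 d1 s0 hd0 hd1 hSig pi1 pi2 i1 i2); assumption.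
  - intros m m' (_ & _ & hm1 & hm2 & _) (_ & _ & hm1' & hm2' & _). auto.
Qed.
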